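(* Let $G$ be a connected weighted multigraph on the vertex set $V$, $|V|=n\ge2$, with positive edge weights and Laplacian matrix $L$, and let $\tilde G$ be any balance-graph of $G$. For $\alpha>0$ let $Q_\alpha=(I+\alpha L)^{-1}=(q_{ij}(\alpha))$ and let $$d^F_\alpha(i,j)=\theta\Bigl(\tfrac12\bigl(\ln q_{ii}(\alpha)+\ln q_{jj}(\alpha)\bigr)-\ln q_{ij}(\alpha)\Bigr),\qquad\theta=\ln\bigl(e+\alpha^{2/n}\bigr)\frac{\alpha-1}{\ln\alpha}$$ ($\theta=\ln(e+1)$ at $\alpha=1$) be the logarithmic forest distance with edge weight transformation $w\mapsto\alpha w$. Then for every $\alpha>0$ and all $i,j\in V$, $d^F_\alpha(i,j)=\tilde d^{W}_\alpha(i,j)$, where $\tilde d^W_\alpha$ is the walk distance of $\tilde G$: with $\tilde A$ the weighted adjacency matrix of $\tilde G$, $\tilde\rho$ its spectral radius, $t=(\tilde\rho+\alpha^{-1})^{-1}$ and $(I-t\tilde A)^{-1}=(r_{ij})$, $\tilde d^W_\alpha(i,j)=\theta\bigl(\tfrac12(\ln r_{ii}+\ln r_{jj})-\ln r_{ij}\bigr)$.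
   Context: Loops and multiple edges are allowed. The weighted adjacency matrix $A=(a_{ij})$ has $a_{ij}$ equal to the sum of weights of the edges joining $i$ and $j$; $L=\operatorname{diag}(A\mathbf 1)-A$. A balance-graph of $G$ is a graph $\tilde G$ with $V(\tilde G)=V$, $E(G)\subseteq E(\tilde G)$, the edges of $E(G)$ keeping their weights, $E(\tilde G)\setminus E(G)$ consisting of loops (with positive weights), and such that the weighted adjacency matrix of $\tilde G$ has constant row sums. *)

From HB Require Import structures.
From mathcomp Require Import all_boot all_order all_algebra.
From mathcomp Require Import complex.
From mathcomp Require Import reals.
From mathcomp.analysis Require Import sequences exp.
Set Implicit Arguments. Unset Strict Implicit. Unset Printing Implicit Defensive.
Import Order.TTheory GRing.Theory Num.Theory.
Local Open Scope ring_scope.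

(* A weighted multigraph on the vertex set 'I_n is a finite list of edges
   (i, j, w): an edge joining i and j (a loop if i = j) with weight w. *)
Definition wedge (R : Type) (n : nat) := ('I_n * 'I_n * R)%type.

Definition joins n (i j : 'I_n) (a b : 'I_n) :=
  ((a == i) && (b == j)) || ((a == j) && (b == i)).

Definition adjmx (R : realType) n (E : seq (wedge R n)) : 'M[R]_n :=
  \matrix_(i, j) \sum_(e <- E | joins i j e.1.1 e.1.2) e.2.

Definition lapmx (R : realType) n (E : seq (wedge R n)) : 'M[R]_n :=
  diag_mx (\row_i \sum_j adjmx E i j) - adjmx E.

Definition pos_weights (R : realType) n (E : seq (wedge R n)) :=
  all (fun e => 0 < e.2) E.

Definition mg_connected (R : realType) n (E : seq (wedge R n)) :=
  forall i j : 'I_n, connect [rel a b | adjmx E a b != 0] i j.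

Definition balance_graph (R : realType) n (E Et : seq (wedge R n)) :=
  exists2 X : seq (wedge R n), Et = E ++ X &
    all (fun e => (e.1.1 == e.1.2) && (0 < e.2)) X /\
    exists c : R, forall i : 'I_n, \sum_j adjmx Et i j = c.

Definition spectral_radius (R : realType) n (A : 'M[R]_n) (rho : R) :=
  let Ac := map_mx (fun x : R => x%:C%C) A in
  (exists2 l : R[i], eigenvalue Ac l & `|l| = rho%:C%C) /\
  (forall l : R[i], eigenvalue Ac l -> `|l| <= rho%:C%C).

Definition theta (R : realType) (n : nat) (alpha : R) : R :=
  if alpha == 1 then ln (expR 1 + 1)
  else ln (expR 1 + powR alpha (2 / n%:R)) * (alpha - 1) / ln alpha.

Definition logdist (R : realType) n (th : R) (M : 'M[R]_n) (i j : 'I_n) : R :=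
  th * ((ln (M i i) + ln (M j j)) / 2 - ln (M i j)).

Definition forest_dist (R : realType) n (E : seq (wedge R n)) (alpha : R)
    (i j : 'I_n) : R :=
  logdist (theta n alpha) (invmx (1%:M + alpha *: lapmx E)) i j.

Definition walk_dist (R : realType) n (Et : seq (wedge R n)) (rho alpha : R)
    (i j : 'I_n) : R :=
  let t := (rho + alpha^-1)^-1 in
  logdist (theta n alpha) (invmx (1%:M - t *: adjmx Et)) i j.

From HB Require Import structures.
From mathcomp Require Import all_boot all_order all_algebra.
From mathcomp Require Import complex.
From mathcomp Require Import reals.
From mathcomp.analysis Require Import sequences exp.
From mathcomp Require Import ring.
Set Implicit Arguments. Unset Strict Implicit. Unset Printing Implicit Defensive.
Import Order.TTheory GRing.Theory Num.Theory.
Local Open Scope ring_scope.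

(* If c is the common row sum of the balance-graph, its adjacency matrix is
   c I - L, and c is its spectral radius (the matrix is symmetric, nonnegative
   and has constant row sums).  Hence I - t Ã = (t / alpha) (I + alpha L) for
   t = (c + 1/alpha)^-1, so the two resolvents differ by a positive scalar
   factor.  The logarithmic distance of a matrix with positive entries ignores
   such a factor, and the entries of (I + alpha L)^-1 are positive because G
   is connected. *)

Section LogDist.
Variables (R : realType) (n : nat).

Lemma logdist_scale (th k : R) (M : 'M[R]_n) (i j : 'I_n) :
  0 < k -> 0 < M i i -> 0 < M j j -> 0 < M i j ->
  logdist th (k *: M) i j = logdist th M i j.
Proof.
move=> k_gt0 Mii Mjj Mij; rewrite /logdist !mxE !lnM ?posrE //.
by congr (_ * _); field.
Qed.

End LogDist.

Section NonnegativeSpectrum.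
Variables (R : realType) (n : nat) (A : 'M[R]_n) (c : R).
Hypotheses (A_ge0 : forall i j, 0 <= A i j) (colsumA : forall j, \sum_i A i j = c).
Let Ac := map_mx (fun x : R => x%:C%C) A.

(* [eigenvalue] is defined through row eigenvectors [v *m Ac = l *: v], which
   is why column sums are the relevant ones here. *)

Lemma eigenvalue_colsum (i0 : 'I_n) : eigenvalue Ac c%:C%C.
Proof.
apply/eigenvalueP; exists (const_mx 1).
  apply/matrixP => i j; rewrite !mxE.
  under eq_bigr do rewrite !mxE mul1r.
  by rewrite -rmorph_sum mulr1 colsumA.
by apply/eqP => /matrixP /(_ 0 i0) /eqP; rewrite !mxE oner_eq0.
Qed.

Lemma eigenvalue_le_colsum l : eigenvalue Ac l -> `|l| <= c%:C%C.
Proof.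
move=> /eigenvalueP [v vA v_neq0].
have i0 : 'I_n.
  case: n v v_neq0 {vA} => [|m] v; last by move=> _; exact: ord0.
  by move=> /eqP []; apply/matrixP => i [].
pose f k := complex.Re `|v 0 k|.
have normvE k : `|v 0 k| = (f k)%:C%C by rewrite /f RRe_real // normr_real.
have [j0 _ j0_max] := @arg_maxP _ _ _ i0 xpredT f isT.
have vj0_max k : `|v 0 k| <= `|v 0 j0| by rewrite !normvE lecR; exact: j0_max.
have vj0_gt0 : 0 < `|v 0 j0|.
  rewrite normr_gt0; apply: contraNneq v_neq0 => vj0; apply/eqP/matrixP => i k.
  by rewrite (ord1 i) mxE; apply/eqP; rewrite -normr_le0 -(normr0 R[i]) -vj0.
have lvj0 : l * v 0 j0 = \sum_i v 0 i * (A i j0)%:C%C.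
  by move/matrixP: vA => /(_ 0 j0); rewrite !mxE => <-; under eq_bigr do rewrite mxE.
rewrite -(ler_pM2r vj0_gt0) -normrM lvj0 (le_trans (ler_norm_sum _ _ _)) //.
rewrite mulrC -(colsumA j0) rmorph_sum mulr_sumr ler_sum // => i _.
rewrite normrM [`|(A i j0)%:C%C|]ger0_norm ?ler0c //.
by rewrite ler_wpM2r ?ler0c ?vj0_max.
Qed.

Lemma spectral_radius_colsum (i0 : 'I_n) rho : spectral_radius A rho -> rho = c.
Proof.
move=> [[l l_eig l_rho] rho_max]; apply/eqP; rewrite eq_le.
have c_ge0 : 0 <= c by rewrite -(colsumA i0) sumr_ge0.
rewrite -lecR -l_rho eigenvalue_le_colsum //= -lecR.
by have := rho_max _ (eigenvalue_colsum i0); rewrite ger0_norm // ler0c.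
Qed.

End NonnegativeSpectrum.

Section Adjacency.
Variables (R : realType) (n : nat).
Implicit Types (E X : seq (wedge R n)).

Definition loops_only X := all (fun e : wedge R n => (e.1.1 == e.1.2) && (0 < e.2)) X.

Lemma adjmx_sym E i j : adjmx E i j = adjmx E j i.
Proof. by rewrite !mxE; apply: eq_bigl => e; rewrite /joins orbC. Qed.

Lemma adjmx_ge0 E i j : pos_weights E -> 0 <= adjmx E i j.
Proof.
move=> /allP E_pos; rewrite mxE big_seq_cond sumr_ge0 // => e /andP[eE _].
exact: ltW (E_pos e eE).
Qed.

Lemma adjmx_cat E X : adjmx (E ++ X) = adjmx E + adjmx X.
Proof. by apply/matrixP => i j; rewrite !mxE big_cat. Qed.

Lemma adjmx_loops_offdiag X i j : loops_only X -> i != j -> adjmx X i j = 0.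
Proof.
move=> /allP X_loops i_neq_j; rewrite mxE big_seq_cond big1 // => e /andP[eX].
have /andP[/eqP e_loop _] := X_loops e eX.
rewrite /joins e_loop => /orP[] /andP[/eqP-ei /eqP-ej];
  by move: i_neq_j; rewrite -ei -ej eqxx.
Qed.

Lemma pos_weights_balance E Et :
  pos_weights E -> balance_graph E Et -> pos_weights Et.
Proof.
move=> E_pos [X -> [X_loops _]]; rewrite /pos_weights all_cat; apply/andP.
by split; [exact: E_pos | apply: sub_all X_loops => e /andP[]].
Qed.

Lemma adjmx_balance E X c :
  loops_only X -> (forall i, \sum_j adjmx (E ++ X) i j = c) ->
  adjmx (E ++ X) = c%:M - lapmx E.
Proof.
move=> X_loops rowsum; apply/matrixP => i j.
have rowsum_i : \sum_k adjmx E i k + adjmx X i i = c.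
  rewrite -(rowsum i) adjmx_cat; under [RHS]eq_bigr do rewrite mxE.
  rewrite big_split /=; congr (_ + _).
  rewrite (bigD1 i) //= big1 ?addr0 // => k k_neq_i.
  by rewrite adjmx_loops_offdiag // eq_sym.
have [<-|i_neq_j] := eqVneq i j;
  [move: rowsum_i | move: (adjmx_loops_offdiag X_loops i_neq_j)];
  rewrite /lapmx adjmx_cat; move: (adjmx E) (adjmx X) => A B; rewrite !mxE.
- by rewrite eqxx !mulr1n => <-; ring.
- by rewrite (negbTE i_neq_j) !mulr0n => ->; ring.
Qed.

End Adjacency.

Section ForestMatrix.
Variables (R : realType) (n : nat) (E : seq (wedge R n)) (alpha : R).
Hypotheses (E_pos : pos_weights E) (alpha_gt0 : 0 < alpha).

Definition forest_mx := 1%:M + alpha *: lapmx E.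

Lemma mulmx_forest_mx m (P : 'M_(m, n)) k j :
  (P *m forest_mx) k j = P k j + alpha * \sum_i adjmx E j i * (P k j - P k i).
Proof.
rewrite /forest_mx /lapmx; have A_sym := adjmx_sym E.
move: (adjmx E) A_sym => A A_sym.
rewrite mulmxDr mulmx1 -scalemxAr mulmxBr mul_mx_diag !mxE.
congr (_ + alpha * _); under [RHS]eq_bigr do rewrite mulrBr.
rewrite sumrB mulr_sumr; congr (_ - _); apply: eq_bigr => i _.
  by rewrite mulrC.
by rewrite A_sym mulrC.
Qed.

(* Discrete minimum principle: at a minimal entry j0 of row k of P the
   Laplacian term is <= 0, so P k j0 >= (P *m forest_mx) k j0 >= 0. *)
Lemma forest_mx_min_principle m (P : 'M_(m, n)) k :
  (forall j, 0 <= (P *m forest_mx) k j) -> forall j, 0 <= P k j.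
Proof.
move=> image_ge0 j.
have [j0 _ j0_min] := @arg_minP _ _ _ j xpredT (fun l => P k l) isT.
apply: le_trans (j0_min j isT); apply: le_trans (image_ge0 j0) _.
rewrite mulmx_forest_mx gerDl pmulr_rle0 // sumr_le0 // => i _.
by rewrite mulr_ge0_le0 ?adjmx_ge0 // subr_le0 j0_min.
Qed.

Lemma forest_mx_unit : forest_mx \in unitmx.
Proof.
rewrite -row_free_unit -kermx_eq0; apply/eqP/matrixP => k j.
have kerM : kermx forest_mx *m forest_mx = 0 by rewrite mulmx_ker.
have := forest_mx_min_principle (P := kermx forest_mx) (k := k) _ j.
have := forest_mx_min_principle (P := - kermx forest_mx) (k := k) _ j.
rewrite mulNmx kerM oppr0 !mxE oppr_ge0 => ker_le0 ker_ge0.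
by apply/eqP; rewrite eq_le ker_le0 ?ker_ge0 // => i; rewrite mxE.
Qed.

Let Q := invmx forest_mx.

Lemma forest_inv_lapl k j :
  (k == j)%:R = Q k j + alpha * \sum_i adjmx E j i * (Q k j - Q k i).
Proof. by rewrite -mulmx_forest_mx mulVmx ?forest_mx_unit // mxE. Qed.

Lemma forest_inv_ge0 k j : 0 <= Q k j.
Proof.
apply: forest_mx_min_principle => i.
by rewrite mulVmx ?forest_mx_unit // mxE ler0n.
Qed.

(* At a zero entry of a row of Q the Laplacian term equals the nonnegative
   value (k == a)%:R, so every neighbour of a vanishes as well. *)
Lemma forest_inv_eq0_adj k a b :
  adjmx E a b != 0 -> Q k a = 0 -> Q k b = 0.
Proof.
move=> ab_edge Qa0.
have terms_ge0 i : 0 <= adjmx E a i * Q k i.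
  by rewrite mulr_ge0 ?adjmx_ge0 ?forest_inv_ge0.
have sum0 : \sum_i adjmx E a i * Q k i = 0.
  have := forest_inv_lapl k a; rewrite Qa0 add0r.
  under eq_bigr do rewrite sub0r mulrN.
  rewrite sumrN mulrN => lapl; apply/eqP; rewrite eq_le sumr_ge0 ?andbT //.
  by rewrite -(pmulr_rle0 _ alpha_gt0) -oppr_ge0 -lapl ler0n.
have /eqP := psumr_eq0P (fun i _ => terms_ge0 i) sum0 (i := b) isT.
by rewrite mulf_eq0 (negbTE ab_edge) => /eqP.
Qed.

Lemma forest_inv_diag_neq0 k : Q k k != 0.
Proof.
apply/eqP => Qkk0; have := forest_inv_lapl k k; rewrite eqxx Qkk0 add0r => lapl.
suff : (1 : R) <= 0 by rewrite ler10.
rewrite -[1 : R]/(true%:R) lapl pmulr_rle0 // sumr_le0 // => i _.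
by rewrite sub0r mulrN oppr_le0 mulr_ge0 ?adjmx_ge0 ?forest_inv_ge0.
Qed.

Lemma forest_inv_gt0 : mg_connected E -> forall k j, 0 < Q k j.
Proof.
move=> E_conn k j; rewrite lt_def forest_inv_ge0 andbT.
have sym_edge : connect_sym [rel a b | adjmx E a b != 0].
  by apply: sym_connect_sym => a b /=; rewrite adjmx_sym.
have zeros_closed : closed [rel a b | adjmx E a b != 0] [pred a | Q k a == 0].
  apply: (intro_closed sym_edge) => a b /= ab_edge /eqP Qa0.
  by rewrite inE (forest_inv_eq0_adj ab_edge Qa0).
have := closed_connect zeros_closed (E_conn j k).
by rewrite !inE (negbTE (forest_inv_diag_neq0 k)) => ->.
Qed.

End ForestMatrix.

Lemma walk_mx_forest_mx (R : fieldType) n (L : 'M[R]_n) (c alpha : R) :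
  alpha != 0 -> c * alpha + 1 != 0 ->
  let t := (c + alpha^-1)^-1 in
  1%:M - t *: (c%:M - L) = (t / alpha) *: (1%:M + alpha *: L).
Proof.
move=> alpha_neq0 calpha1_neq0 t; apply/matrixP => a b; rewrite !mxE /t.
by case: (a == b); rewrite ?mulr1n ?mulr0n; field; rewrite alpha_neq0.
Qed.

Theorem corollary6 (R : realType) (n : nat) (E Et : seq (wedge R n))
  (rho : R) :
  (2 <= n)%N -> pos_weights E -> mg_connected E ->
  balance_graph E Et -> spectral_radius (adjmx Et) rho ->
  forall alpha : R, 0 < alpha ->
  forall i j : 'I_n, forest_dist E alpha i j = walk_dist Et rho alpha i j.
Proof.
move=> _ E_pos E_conn Et_bal rho_spec alpha alpha_gt0 i j.
have Et_pos := pos_weights_balance E_pos Et_bal.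
have [X Et_def [X_loops [c rowsum]]] := Et_bal.
have colsum k : \sum_l adjmx Et l k = c.
  by rewrite -(rowsum k); apply: eq_bigr => l _; rewrite adjmx_sym.
have c_ge0 : 0 <= c by rewrite -(rowsum i) sumr_ge0 // => l _; rewrite adjmx_ge0.
have -> : rho = c.
  by apply: (spectral_radius_colsum _ colsum i) => // a b; rewrite adjmx_ge0.
have t_gt0 : 0 < (c + alpha^-1)^-1 by rewrite invr_gt0 ltr_wpDl ?invr_gt0.
have Et_adj : adjmx Et = c%:M - lapmx E.
  by rewrite Et_def; apply: adjmx_balance; rewrite // -Et_def.
rewrite /walk_dist /= Et_adj walk_mx_forest_mx.
- rewrite invmxZ ?unitmxZ ?forest_mx_unit ?unitfE ?gt_eqF ?divr_gt0 //.
  by rewrite logdist_scale ?invr_gt0 ?divr_gt0 ?forest_inv_gt0.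
- by rewrite gt_eqF.
- by rewrite gt_eqF // ltr_wpDl ?ltr01 // mulr_ge0 // ltW.
Qed.
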